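(* Let $(Q,\cdot)$ be a quasigroup. Then $Q$ satisfies the identity $x(y(zx))=(x(yz))x$ for all $x,y,z\in Q$ if and only if $Q$ satisfies the identity $x(y(zz))=(x(yz))z$ for all $x,y,z\in Q$.
   Context: A quasigroup is a set $Q$ with a binary operation $\cdot$ (written as juxtaposition) such that for all $a,b\in Q$ each of the equations $ax=b$ and $ya=b$ has a unique solution in $Q$. *)

Definition is_quasigroup {Q : Type} (mul : Q -> Q -> Q) : Prop :=
  (forall a b : Q, exists! x : Q, mul a x = b) /\
  (forall a b : Q, exists! y : Q, mul y a = b).

(** In a quasigroup call "transfer" the property that [a(bw)] depends only on
    [ab], i.e. [ab = cd] implies [a(bw) = c(dw)].  Under transfer each law
    yields the other in three rewriting steps, so it suffices that each law
    implies transfer.  For [x(y(zx)) = (x(yz))x] this is left cancellation in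
    [w(a(bw)) = (w(ab))w].  From [x(y(zz)) = (x(yz))z] one gets
    [(xv)z = x((v/z)(zz))], so every right translation commutes with the maps
    [v |-> a(b\v)]; as these act transitively, [v |-> (v/z)(zz)] is a right
    translation [v |-> vk].  Hence [(xv)z = x(vk)] for all [x, v], every [k]
    arises from some [z], and transfer follows. *)

From Stdlib Require Import IndefiniteDescription.

Lemma is_quasigroup_divisions (Q : Type) (mul : Q -> Q -> Q) :
  is_quasigroup mul ->
  exists ldiv rdiv : Q -> Q -> Q,
    (forall a b, mul a (ldiv a b) = b) /\ (forall a b, ldiv a (mul a b) = b) /\
    (forall a b, mul (rdiv b a) a = b) /\ (forall a b, rdiv (mul b a) a = b).
Proof.
  intros [Hl Hr].
  destruct (functional_choice (fun a g => forall b, mul a (g b) = b))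
    as [ldiv Hldiv].
  { intro a. apply (functional_choice (fun b x => mul a x = b)). intro b.
    destruct (Hl a b) as [x [Hx _]]. eauto. }
  destruct (functional_choice (fun a g => forall b, mul (g b) a = b))
    as [rdiv' Hrdiv].
  { intro a. apply (functional_choice (fun b y => mul y a = b)). intro b.
    destruct (Hr a b) as [y [Hy _]]. eauto. }
  exists ldiv, (fun b a => rdiv' a b).
  repeat split; intros a b.
  - apply Hldiv.
  - destruct (Hl a (mul a b)) as [x [_ Hx]].
    transitivity x; [symmetry |]; apply Hx; auto.
  - apply Hrdiv.
  - destruct (Hr a (mul b a)) as [y [_ Hy]].
    transitivity y; [symmetry |]; apply Hy; auto.
Qed.

Section EquationalQuasigroup.

Variables (Q : Type) (mul ldiv rdiv : Q -> Q -> Q).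

Declare Scope quasigroup_scope.
Local Open Scope quasigroup_scope.
Local Infix "·" := mul (at level 40, left associativity) : quasigroup_scope.
Local Infix "\" := ldiv (at level 40, left associativity) : quasigroup_scope.
Local Infix "/" := rdiv : quasigroup_scope.

Hypothesis mul_ldiv : forall a b, a · (a \ b) = b.
Hypothesis ldiv_mul : forall a b, a \ (a · b) = b.
Hypothesis mul_rdiv : forall a b, (b / a) · a = b.
Hypothesis rdiv_mul : forall a b, (b · a) / a = b.

Lemma mul_cancel_l a x y : a · x = a · y -> x = y.
Proof. intro H. rewrite <- (ldiv_mul a x), H. apply ldiv_mul. Qed.

Lemma mul_cancel_r a x y : x · a = y · a -> x = y.
Proof. intro H. rewrite <- (rdiv_mul a x), H. apply rdiv_mul. Qed.

Definition law_xyzx := forall x y z, x · (y · (z · x)) = (x · (y · z)) · x.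
Definition law_xyzz := forall x y z, x · (y · (z · z)) = (x · (y · z)) · z.
Definition mul_transfer :=
  forall a b c d w, a · b = c · d -> a · (b · w) = c · (d · w).

Lemma mul_transfer_of_xyzx : law_xyzx -> mul_transfer.
Proof.
  intros Hxyzx a b c d w H. apply (mul_cancel_l w).
  rewrite !Hxyzx, H. reflexivity.
Qed.

Lemma law_xyzz_of_transfer : mul_transfer -> law_xyzx -> law_xyzz.
Proof.
  intros Htr Hxyzx x y z.
  set (p := z \ (x · y)).
  assert (Hp : z · p = x · y) by apply mul_ldiv.
  rewrite (Htr x y z p) by auto.
  rewrite Hxyzx. f_equal. apply Htr. exact Hp.
Qed.

Lemma law_xyzx_of_transfer : mul_transfer -> law_xyzz -> law_xyzx.
Proof.
  intros Htr Hxyzz x y z.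
  set (y' := (y · z) / x).
  assert (Hy' : y' · x = y · z) by apply mul_rdiv.
  rewrite (Htr y z y' x) by auto.
  rewrite Hxyzz, Hy'. reflexivity.
Qed.

Section LawXYZZ.

Hypothesis Hxyzz : law_xyzz.

Lemma twisted_assoc_rdiv x v z : (x · v) · z = x · ((v / z) · (z · z)).
Proof. rewrite Hxyzz, mul_rdiv. reflexivity. Qed.

Lemma mul_r_comm_mul_ldiv a b v z : (a · (b \ v)) · z = a · (b \ (v · z)).
Proof.
  rewrite twisted_assoc_rdiv. f_equal. apply (mul_cancel_l b).
  rewrite <- twisted_assoc_rdiv, !mul_ldiv. reflexivity.
Qed.

(* The maps [v |-> a(e\v)] act transitively, so a map commuting with all of
   them is fixed by its value at [e]. *)
Lemma comm_mul_ldiv_mul_r (f : Q -> Q) e v :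
  (forall a b m, f (a · (b \ m)) = a · (b \ f m)) -> f v = v · (e \ f e).
Proof.
  intro Hf.
  assert (Hv : v = (v / (e \ e)) · (e \ e)) by (symmetry; apply mul_rdiv).
  rewrite Hv at 1 2. rewrite Hf, mul_r_comm_mul_ldiv, mul_ldiv. reflexivity.
Qed.

Lemma twisted_assoc e x v z :
  (x · v) · z = x · (v · (e \ ((e / z) · (z · z)))).
Proof.
  rewrite twisted_assoc_rdiv. f_equal.
  apply (comm_mul_ldiv_mul_r (fun u => (u / z) · (z · z))).
  intros a b m.
  assert (Hdiv : (a · (b \ m)) / z = a · (b \ (m / z))).
  { apply (mul_cancel_r z). rewrite mul_rdiv, mul_r_comm_mul_ldiv, mul_rdiv.
    reflexivity. }
  rewrite Hdiv, mul_r_comm_mul_ldiv. reflexivity.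
Qed.

Lemma mul_transfer_of_xyzz : mul_transfer.
Proof.
  intros a b c d w H.
  set (z := (a · a) \ (a · (a · w))).
  assert (Hw : a \ ((a / z) · (z · z)) = w).
  { apply (mul_cancel_l a), (mul_cancel_l a).
    rewrite <- twisted_assoc. apply mul_ldiv. }
  rewrite <- Hw, <- (twisted_assoc a a b z), <- (twisted_assoc a c d z), H.
  reflexivity.
Qed.

End LawXYZZ.

Lemma law_xyzx_iff_xyzz : law_xyzx <-> law_xyzz.
Proof.
  split; intro H.
  - exact (law_xyzz_of_transfer (mul_transfer_of_xyzx H) H).
  - exact (law_xyzx_of_transfer (mul_transfer_of_xyzz H) H).
Qed.

End EquationalQuasigroup.

Theorem mainTheorem2 (Q : Type) (mul : Q -> Q -> Q) (HQ : is_quasigroup mul) :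
  (forall x y z : Q, mul x (mul y (mul z x)) = mul (mul x (mul y z)) x) <->
  (forall x y z : Q, mul x (mul y (mul z z)) = mul (mul x (mul y z)) z).
Proof.
  destruct (is_quasigroup_divisions Q mul HQ)
    as (ldiv & rdiv & mul_ldiv & ldiv_mul & mul_rdiv & rdiv_mul).
  exact (law_xyzx_iff_xyzz Q mul ldiv rdiv mul_ldiv ldiv_mul mul_rdiv rdiv_mul).
Qed.
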